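(* Let $H$ be a finite-dimensional complex Hilbert space and let $\mathcal{SA}(H)=\{A\colon H\to H \text{ linear} \mid A^{\dagger}=A\}$ be the set of self-adjoint operators on $H$. Then $\mathcal{SA}(H)$ is a real vector space, and the map $$\mathrm{hs}_{\mathcal{SA}}\colon \mathcal{SA}(H)\longrightarrow \mathcal{SA}(H)^{*}=\big(\mathcal{SA}(H)\multimap\mathbb{R}\big),\qquad \mathrm{hs}_{\mathcal{SA}}(A)(B)=\mathrm{tr}(AB),$$ is a well-defined isomorphism of real vector spaces, natural in $H$ in the sense that for every linear map $C\colon H\to K$ between finite-dimensional Hilbert spaces, $\mathcal{SA}(C)^{*}\circ\mathrm{hs}_{\mathcal{SA},K}=\mathrm{hs}_{\mathcal{SA},H}\circ\mathcal{SA}(C^\dagger)$, where $\mathcal{SA}(C)^*(f)=f\circ\mathcal{SA}(C)$. Moreover, the functors $\mathcal{SA}\colon\mathbf{FdHilb}\to\mathbf{Vect}_{\mathbb{R}}$ and $\mathcal{SA}\colon\mathbf{FdHilb}^{\mathrm{op}}\to\mathbf{Vect}_{\mathbb{R}}^{\mathrm{op}}$ together with these isomorphisms form a map of adjunctions (in the sense of Mac Lane, IV.7, with functor squares commuting up to the isomorphisms $\mathrm{hs}_{\mathcal{SA}}$) from the adjunction $(-)^{\dagger}\dashv(-)^{\dagger}$ between $\mathbf{FdHilb}$ and $\mathbf{FdHilb}^{\mathrm{op}}$ to the adjunction $((-)\multimap\mathbb{R})\dashv((-)\multimap\mathbb{R})$ between $\mathbf{Vect}_{\mathbb{R}}$ and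 $\mathbf{Vect}_{\mathbb{R}}^{\mathrm{op}}$.
   Context: $\mathbf{FdHilb}$ is the category of finite-dimensional complex Hilbert spaces with linear maps; $C^{\dagger}$ is the adjoint of $C$; $(-)^\dagger\colon\mathbf{FdHilb}\to\mathbf{FdHilb}^{\mathrm{op}}$ is identity on objects and $C\mapsto C^\dagger$ on maps, and is self-adjoint. $\mathbf{Vect}_{\mathbb{R}}$ is the category of real vector spaces and linear maps; $V\multimap\mathbb{R}$ is the space of linear maps $V\to\mathbb{R}$, and the functor $(-)\multimap\mathbb{R}\colon\mathbf{Vect}_{\mathbb{R}}\to\mathbf{Vect}_{\mathbb{R}}^{\mathrm{op}}$ (acting on maps by precomposition) is adjoint to itself via swapping arguments (linear maps $V\to(W\multimap\mathbb{R})$ correspond to $W\to(V\multimap\mathbb{R})$). The functor $\mathcal{SA}$ sends $H$ to $\mathcal{SA}(H)$ and $C\colon H\to K$ to $\mathcal{SA}(C)(A)=CAC^{\dagger}$. $\mathrm{tr}$ is the trace. *)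

From HB Require Import structures.
From mathcomp Require Import all_boot all_order all_algebra.
From mathcomp Require Import reals.
From mathcomp Require Import complex.
Set Implicit Arguments. Unset Strict Implicit. Unset Printing Implicit Defensive.
Import Order.TTheory GRing.Theory Num.Theory.
Local Open Scope ring_scope.
Local Open Scope complex_scope.

(* A finite-dimensional complex Hilbert space of dimension n is modelled as
   C^n = 'cV[R[i]]_n with the standard inner product <x,y> = x^* y, where
   R : realType is the real numbers and R[i] the complex numbers.
   A linear map H -> K (dim H = n, dim K = k) is a matrix 'M_(k, n)
   acting on column vectors. *)

Definition dag (R : realType) (k n : nat) (C : 'M[R[i]]_(k, n)) : 'M[R[i]]_(n, k) :=
  (map_mx (@conjc R) C)^T.

Definition selfadj (R : realType) (n : nat) (A : 'M[R[i]]_n) : Prop :=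
  dag A = A.

Definition SAmap (R : realType) (k n : nat) (C : 'M[R[i]]_(k, n))
  (A : 'M[R[i]]_n) : 'M[R[i]]_k := C *m A *m dag C.

(* hs(A)(B) = tr(AB), as a real number (its real part; the theorem states
   that tr(AB) is real for self-adjoint A, B) *)
Definition hs (R : realType) (n : nat) (A B : 'M[R[i]]_n) : R :=
  complex.Re (\tr (A *m B)).

(* f : matrices -> R is an element of SA(H) -o R, i.e. its restriction to
   SA(H) is R-linear (only its values on SA(H) matter) *)
Definition real_linear_on_SA (R : realType) (n : nat) (f : 'M[R[i]]_n -> R) : Prop :=
  forall (r : R) (A B : 'M[R[i]]_n), selfadj A -> selfadj B ->
    f ((r%:C) *: A + B) = r * f A + f B.

From HB Require Import structures.
From mathcomp Require Import all_boot all_order all_algebra.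
From mathcomp Require Import reals complex.
From mathcomp Require Import ring lra.
Set Implicit Arguments.
Unset Strict Implicit.
Unset Printing Implicit Defensive.

Import Order.TTheory GRing.Theory Num.Theory.
Local Open Scope ring_scope.
Local Open Scope complex_scope.

(* tr(AB) is real for self-adjoint A, B since its conjugate is
   tr(B^dag A^dag) = tr(BA).  The self-adjoint matrices E_ij + E_ji and
   i(E_ij - E_ji) span SA(H) over R: twice a self-adjoint B is their real
   combination with coefficients Re B_ij and Im B_ij.  Their pairings with a
   self-adjoint A are 2 Re A_ij and 2 Im A_ij, so A is recovered from hs(A),
   and every real-linear functional f is hs of the matrix with entries
   (f(E_ij + E_ji) + i f(i(E_ij - E_ji)))/2.  Naturality and the
   map-of-adjunctions condition are cyclicity of the trace. *)

Section SelfAdjoint.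
Variable R : realType.
Implicit Types (r : R) (z w : R[i]).

Lemma ReD z w : complex.Re (z + w) = complex.Re z + complex.Re w.
Proof. by case: z w => a b [c d]. Qed.

Lemma ReMr r z : complex.Re (r%:C * z) = r * complex.Re z.
Proof. by case: z => a b /=; rewrite mul0r subr0. Qed.

Lemma conjc_fixed_real z : conjc z = z -> z = (complex.Re z)%:C.
Proof. by case: z => a b [bN]; congr Complex; lra. Qed.

Lemma complex_rect z : z = (complex.Re z)%:C + 'i * (complex.Im z)%:C.
Proof. by case: z => a b; simpc. Qed.

Lemma conjc_rect z : conjc z = (complex.Re z)%:C - 'i * (complex.Im z)%:C.
Proof. by case: z => a b; simpc. Qed.

Section Dagger.
Variables m k n : nat.

Lemma dagD (A B : 'M[R[i]]_(k, n)) : dag (A + B) = dag A + dag B.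
Proof. by rewrite /dag map_mxD linearD. Qed.

Lemma dagZ z (A : 'M[R[i]]_(k, n)) : dag (z *: A) = conjc z *: dag A.
Proof. by rewrite /dag map_mxZ linearZ. Qed.

Lemma dag_realZ r (A : 'M[R[i]]_(k, n)) : dag (r%:C *: A) = r%:C *: dag A.
Proof. by rewrite dagZ; congr (_ *: _); apply: conjc_real. Qed.

Lemma dag0 : dag (0 : 'M[R[i]]_(k, n)) = 0.
Proof. by rewrite /dag map_mx0 trmx0. Qed.

Lemma dagN (A : 'M[R[i]]_(k, n)) : dag (- A) = - dag A.
Proof. by rewrite /dag map_mxN linearN. Qed.

Lemma dag_sum (I : Type) (s : seq I) (F : I -> 'M[R[i]]_(k, n)) :
  dag (\sum_(i <- s) F i) = \sum_(i <- s) dag (F i).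
Proof. exact: (big_morph _ dagD dag0). Qed.

Lemma dagM (A : 'M[R[i]]_(m, k)) (B : 'M[R[i]]_(k, n)) :
  dag (A *m B) = dag B *m dag A.
Proof. by rewrite /dag map_mxM trmx_mul. Qed.

Lemma dagK (A : 'M[R[i]]_(k, n)) : dag (dag A) = A.
Proof. by apply/matrixP => i j; rewrite /dag !mxE conjcK. Qed.

Lemma dag_delta (i : 'I_k) (j : 'I_n) : dag (delta_mx i j : 'M[R[i]]_(k, n)) = delta_mx j i.
Proof. by rewrite /dag map_delta_mx trmx_delta. Qed.

End Dagger.

Lemma dag1 n : dag (1%:M : 'M[R[i]]_n) = 1%:M.
Proof. by rewrite /dag map_mx1 trmx1. Qed.

Lemma mxtrace_dag n (A : 'M[R[i]]_n) : \tr (dag A) = conjc (\tr A).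
Proof.
rewrite /dag mxtrace_tr /mxtrace rmorph_sum.
by apply: eq_bigr => i _; rewrite mxE.
Qed.

Section SelfAdjointSpace.
Variable n : nat.
Implicit Types (A B X Y : 'M[R[i]]_n) (f : 'M[R[i]]_n -> R).

Lemma selfadj0 : selfadj (0 : 'M[R[i]]_n).
Proof. exact: dag0. Qed.

Lemma selfadjD A B : selfadj A -> selfadj B -> selfadj (A + B).
Proof. by rewrite /selfadj dagD => -> ->. Qed.

Lemma selfadjZ r A : selfadj A -> selfadj (r%:C *: A).
Proof. by rewrite /selfadj dag_realZ => ->. Qed.

Lemma selfadj_sum (I : Type) (s : seq I) (F : I -> 'M[R[i]]_n) :
  (forall i, selfadj (F i)) -> selfadj (\sum_(i <- s) F i).
Proof. by move=> sF; apply: big_ind => //; [exact: selfadj0 | exact: selfadjD]. Qed.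

Lemma selfadj_entry A i j : selfadj A -> A j i = conjc (A i j).
Proof. by move=> sA; rewrite -{1}sA /dag !mxE. Qed.

Lemma mxtrace_mul_selfadj A B :
  selfadj A -> selfadj B -> \tr (A *m B) = (hs A B)%:C.
Proof.
move=> sA sB; apply: conjc_fixed_real.
by rewrite -mxtrace_dag dagM sA sB mxtrace_mulC.
Qed.

Lemma hsDl r A A' B : hs (r%:C *: A + A') B = r * hs A B + hs A' B.
Proof. by rewrite /hs mulmxDl -scalemxAl mxtraceD mxtraceZ ReD ReMr. Qed.

Lemma real_linear_on_SA_hs A : real_linear_on_SA (hs A).
Proof. by move=> r B B' _ _; rewrite /hs mulmxDr -scalemxAr mxtraceD mxtraceZ ReD ReMr. Qed.

Lemma real_linear_on_SA0 f : real_linear_on_SA f -> f 0 = 0.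
Proof.
move=> fl; have := fl 1 0 0 selfadj0 selfadj0.
rewrite scale1r addr0 mul1r; lra.
Qed.

Lemma real_linear_on_SAD f X Y : real_linear_on_SA f ->
  selfadj X -> selfadj Y -> f (X + Y) = f X + f Y.
Proof. by move=> fl sX sY; have := fl 1 X Y sX sY; rewrite scale1r mul1r. Qed.

Lemma real_linear_on_SAZ f r X : real_linear_on_SA f ->
  selfadj X -> f (r%:C *: X) = r * f X.
Proof.
move=> fl sX; have := fl r X 0 sX selfadj0.
by rewrite !addr0 real_linear_on_SA0 // addr0.
Qed.

Lemma real_linear_on_SAN f X : real_linear_on_SA f ->
  selfadj X -> f (- X) = - f X.
Proof.
move=> fl sX; rewrite -scaleN1r -[-1](rmorphN1 (real_complex R)).
by rewrite real_linear_on_SAZ // mulN1r.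
Qed.

Lemma real_linear_on_SA_sum f (I : Type) (s : seq I) (F : I -> 'M[R[i]]_n) :
  real_linear_on_SA f -> (forall i, selfadj (F i)) ->
  f (\sum_(i <- s) F i) = \sum_(i <- s) f (F i).
Proof.
move=> fl sF; elim: s => [|x s IHs]; first by rewrite !big_nil real_linear_on_SA0.
by rewrite !big_cons real_linear_on_SAD ?IHs //; exact: selfadj_sum.
Qed.

Definition delta_re i j : 'M[R[i]]_n := delta_mx i j + delta_mx j i.
Definition delta_im i j : 'M[R[i]]_n := 'i *: (delta_mx i j - delta_mx j i).

Lemma selfadj_delta_re i j : selfadj (delta_re i j).
Proof. by rewrite /selfadj /delta_re dagD !dag_delta addrC. Qed.

Lemma selfadj_delta_im i j : selfadj (delta_im i j).
Proof.
rewrite /selfadj /delta_im dagZ dagD dagN !dag_delta.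
have -> : conjc 'i = - 'i := @conjCi R[i].
by rewrite scaleNr -scalerN opprB.
Qed.

Lemma delta_reC i j : delta_re j i = delta_re i j.
Proof. by rewrite /delta_re addrC. Qed.

Lemma delta_imC i j : delta_im j i = - delta_im i j.
Proof. by rewrite /delta_im -scalerN opprB. Qed.

Lemma delta_re_im_rect z i j :
  z *: delta_mx i j + conjc z *: delta_mx j i =
  (complex.Re z)%:C *: delta_re i j + (complex.Im z)%:C *: delta_im i j :> 'M_n.
Proof.
apply/matrixP => x y; rewrite !mxE conjc_rect {1}[z]complex_rect.
ring.
Qed.

Lemma selfadj_decomp B : selfadj B ->
  B + B = \sum_i \sum_j ((complex.Re (B i j))%:C *: delta_re i j +
                         (complex.Im (B i j))%:C *: delta_im i j).
Proof.
move=> sB; rewrite {2}[B]matrix_sum_delta -{1}sB {1}[B]matrix_sum_delta dag_sum.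
rewrite -big_split; apply: eq_bigr => i _ /=.
rewrite dag_sum -big_split; apply: eq_bigr => j _ /=.
by rewrite dagZ dag_delta addrC delta_re_im_rect.
Qed.

Lemma mxtrace_mul_delta A i j : \tr (A *m delta_mx i j) = A j i.
Proof.
rewrite /mxtrace (bigD1 j) //= big1 ?addr0 => [|x /negbTE xj]; rewrite mxE.
  rewrite (bigD1 i) //= big1 ?addr0 => [|y /negbTE yi].
    by rewrite mxE !eqxx mulr1.
  by rewrite mxE yi mulr0.
by rewrite big1 // => y _; rewrite mxE xj andbF mulr0.
Qed.

Lemma hs_delta_re A i j : selfadj A ->
  hs A (delta_re i j) = 2%:R * complex.Re (A i j).
Proof.
move=> sA; rewrite /hs /delta_re mulmxDr mxtraceD !mxtrace_mul_delta.
by rewrite selfadj_entry //; case: (A i j) => a b /=; rewrite mulr2n mulrDl mul1r.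
Qed.

Lemma hs_delta_im A i j : selfadj A ->
  hs A (delta_im i j) = 2%:R * complex.Im (A i j).
Proof.
move=> sA; rewrite /hs /delta_im -scalemxAr mxtraceZ mulmxBr linearB /=.
rewrite !mxtrace_mul_delta selfadj_entry //.
by case: (A i j) => a b; simpc; rewrite /= mulr2n mulrDl mul1r.
Qed.

Definition hs_inv f : 'M[R[i]]_n :=
  \matrix_(i, j) ((f (delta_re i j) / 2%:R)%:C + 'i * (f (delta_im i j) / 2%:R)%:C).

Lemma hs_invK A : selfadj A -> hs_inv (hs A) = A.
Proof.
move=> sA; apply/matrixP => i j; rewrite mxE hs_delta_re // hs_delta_im //.
by rewrite [RHS]complex_rect !(mulrC 2%:R) !mulfK ?pnatr_eq0.
Qed.

Lemma selfadj_hs_inv f : real_linear_on_SA f -> selfadj (hs_inv f).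
Proof.
move=> fl; apply/matrixP => i j; rewrite /dag !mxE delta_reC delta_imC.
by rewrite real_linear_on_SAN //; [simpc | exact: selfadj_delta_im].
Qed.

Lemma real_linear_on_SA_eq f g : real_linear_on_SA f -> real_linear_on_SA g ->
  (forall i j, f (delta_re i j) = g (delta_re i j)) ->
  (forall i j, f (delta_im i j) = g (delta_im i j)) ->
  forall B, selfadj B -> f B = g B.
Proof.
move=> fl gl fg_re fg_im B sB.
have sum_re_im h : real_linear_on_SA h -> h (B + B) =
    \sum_i \sum_j (complex.Re (B i j) * h (delta_re i j) +
                   complex.Im (B i j) * h (delta_im i j)).
  move=> hl; have sRe i j := selfadjZ (complex.Re (B i j)) (selfadj_delta_re i j).
  have sIm i j := selfadjZ (complex.Im (B i j)) (selfadj_delta_im i j).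
  rewrite selfadj_decomp // real_linear_on_SA_sum // => [|i]; last first.
    by apply: selfadj_sum => j; exact: selfadjD.
  apply: eq_bigr => i _; rewrite real_linear_on_SA_sum // => [|j]; last first.
    exact: selfadjD.
  apply: eq_bigr => j _; rewrite real_linear_on_SAD // !real_linear_on_SAZ //.
    exact: selfadj_delta_im.
  exact: selfadj_delta_re.
have := sum_re_im g gl; under eq_bigr do under eq_bigr do rewrite -fg_re -fg_im.
rewrite -sum_re_im // !real_linear_on_SAD //; lra.
Qed.

Lemma hs_hs_inv f B : real_linear_on_SA f -> selfadj B -> hs (hs_inv f) B = f B.
Proof.
move=> fl sB; have sA : selfadj (hs_inv f) by exact: selfadj_hs_inv.
apply: real_linear_on_SA_eq => // [|i j|i j]; first exact: real_linear_on_SA_hs.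
  by rewrite hs_delta_re // mxE; simpc; rewrite /= mulrC divfK ?pnatr_eq0.
by rewrite hs_delta_im // mxE; simpc; rewrite /= mulrC divfK ?pnatr_eq0.
Qed.

Lemma hs_inj A A' : selfadj A -> selfadj A' ->
  (forall B, selfadj B -> hs A B = hs A' B) -> A = A'.
Proof.
move=> sA sA' eqAA'; rewrite -(hs_invK sA) -(hs_invK sA').
by apply/matrixP => i j; rewrite !mxE !eqAA' //; [exact: selfadj_delta_im | exact: selfadj_delta_re].
Qed.

Lemma hsC A B : hs A B = hs B A.
Proof. by rewrite /hs mxtrace_mulC. Qed.

End SelfAdjointSpace.

Section Functoriality.
Variables m k n : nat.
Implicit Types (A B : 'M[R[i]]_n) (C : 'M[R[i]]_(k, n)).

Lemma selfadj_SAmap C A : selfadj A -> selfadj (SAmap C A).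
Proof. by rewrite /selfadj /SAmap !dagM dagK mulmxA => ->. Qed.

Lemma SAmapZD C r A B :
  SAmap C (r%:C *: A + B) = r%:C *: SAmap C A + SAmap C B.
Proof. by rewrite /SAmap mulmxDr mulmxDl -!scalemxAr -scalemxAl. Qed.

Lemma SAmap1 A : SAmap 1%:M A = A.
Proof. by rewrite /SAmap dag1 mul1mx mulmx1. Qed.

Lemma SAmapM (D : 'M[R[i]]_(m, k)) C A : SAmap (D *m C) A = SAmap D (SAmap C A).
Proof. by rewrite /SAmap dagM !mulmxA. Qed.

Lemma hs_SAmap C (A : 'M[R[i]]_k) B : hs A (SAmap C B) = hs (SAmap (dag C) A) B.
Proof. by rewrite /hs /SAmap dagK !mulmxA mxtrace_mulC !mulmxA. Qed.

End Functoriality.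
End SelfAdjoint.

Theorem proposition2p2 (R : realType) :
  (forall n : nat,
     selfadj (0 : 'M[R[i]]_n) /\
     (forall (r : R) (A B : 'M[R[i]]_n),
        selfadj A -> selfadj B -> selfadj ((r%:C) *: A + B))) /\
  (forall (n : nat) (A B : 'M[R[i]]_n),
     selfadj A -> selfadj B -> \tr (A *m B) = (hs A B)%:C) /\
  (forall (n : nat) (A : 'M[R[i]]_n), selfadj A -> real_linear_on_SA (hs A)) /\
  (forall (n : nat) (r : R) (A A' B : 'M[R[i]]_n),
     selfadj A -> selfadj A' -> selfadj B ->
     hs ((r%:C) *: A + A') B = r * hs A B + hs A' B) /\
  (forall (n : nat) (A A' : 'M[R[i]]_n), selfadj A -> selfadj A' ->
     (forall B : 'M[R[i]]_n, selfadj B -> hs A B = hs A' B) -> A = A') /\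
  (forall (n : nat) (f : 'M[R[i]]_n -> R), real_linear_on_SA f ->
     exists2 A : 'M[R[i]]_n, selfadj A &
       forall B : 'M[R[i]]_n, selfadj B -> hs A B = f B) /\
  (forall (k n : nat) (C : 'M[R[i]]_(k, n)) (A : 'M[R[i]]_n),
     selfadj A -> selfadj (SAmap C A)) /\
  (forall (k n : nat) (C : 'M[R[i]]_(k, n)) (r : R) (A B : 'M[R[i]]_n),
     selfadj A -> selfadj B ->
     SAmap C ((r%:C) *: A + B) = (r%:C) *: SAmap C A + SAmap C B) /\
  (forall (n : nat) (A : 'M[R[i]]_n), selfadj A -> SAmap 1%:M A = A) /\
  (forall (m k n : nat) (D : 'M[R[i]]_(m, k)) (C : 'M[R[i]]_(k, n))
          (A : 'M[R[i]]_n),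
     selfadj A -> SAmap (D *m C) A = SAmap D (SAmap C A)) /\
  (forall (k n : nat) (C : 'M[R[i]]_(k, n)) (A : 'M[R[i]]_k) (B : 'M[R[i]]_n),
     selfadj A -> selfadj B ->
     hs A (SAmap C B) = hs (SAmap (dag C) A) B) /\
  (forall (k n : nat) (C : 'M[R[i]]_(n, k)) (A : 'M[R[i]]_k) (B : 'M[R[i]]_n),
     selfadj A -> selfadj B ->
     (fun B0 A0 => hs (SAmap C A0) B0) B A = hs (SAmap (dag C) B) A).
Proof.
split=> [n|]; first by split=> [|r A B sA sB]; [exact: selfadj0 | exact: selfadjD (selfadjZ r sA) sB].
split; first exact: mxtrace_mul_selfadj.
split; first by move=> n A _; exact: real_linear_on_SA_hs.
split; first by move=> n r A A' B _ _ _; exact: hsDl.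
split; first exact: hs_inj.
split; first by move=> n f fl; exists (hs_inv f) => [|B]; [exact: selfadj_hs_inv | exact: hs_hs_inv].
split; first exact: selfadj_SAmap.
split; first by move=> k n C r A B _ _; exact: SAmapZD.
split; first by move=> n A _; exact: SAmap1.
split; first by move=> m k n D C A _; exact: SAmapM.
split; first by move=> k n C A B _ _; exact: hs_SAmap.
by move=> k n C A B _ _ /=; rewrite hsC hs_SAmap.
Qed.
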